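(* Let $\tilde\rho:=1-(\epsilon^-/\epsilon^+)^2$. For every $n\ge1$ and every bounded measurable $\varphi$, for every $\mu'\in\mathcal{P}$, every $N\ge1$ and every realization of the $N$-particle system, \[ \left|\Big(\prod_{p=0}^{n-1}\lambda_p^N\Big)^{-1}\mu'Q^N_{0,n}(\varphi)-\mu'(h^N_{0,n})\,\eta_n^N(\varphi)\right|\le2\|\varphi\|\tilde\rho^n\frac{\epsilon^+}{\epsilon^-}, \] \[ \left|\frac{\mu'Q^N_{0,n}(\varphi)}{\mu'Q^N_{0,n}(1)}-\eta_n^N(\varphi)\right|\le2\|\varphi\|\tilde\rho^n\left(\frac{\epsilon^+}{\epsilon^-}\right)^2. \]
   Context: Setting: $(\mathsf{X},\mathcal{B})$ is a measurable space with countably generated $\sigma$-algebra; $\mathcal{P}$ the probability measures. For a measure $\mu$, kernel $K$, function $\varphi$: $\mu(\varphi)=\int\varphi\,d\mu$, $K(\varphi)(x)=\int K(x,dy)\varphi(y)$, $\mu K(\cdot)=\int\mu(dx)K(x,\cdot)$; $1$ is the constant function one; $\|\varphi\|=\sup_x|\varphi(x)|$. $G:\mathsf{X}\to(0,\infty)$ bounded measurable, $M$ a Markov kernel, $Q(x,dy):=G(x)M(x,dy)$. Assumption (H) (in force): there is a probability measure $\nu$ such that for all $x$, $Q(x,\cdot)$ is equivalent to $\nu$ with density $q(x,x')$ satisfying $\epsilon^-\le q\le\epsilon^+$ for constants $0<\epsilon^-,\epsilon^+<\infty$. For $\eta\in\mathcal{P}$, $\Phi(\eta):=\eta Q/\eta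 Q(1)$. Particle system: fix $N\ge1$ and $\mu\in\mathcal{P}$; $\zeta_0^1,\dots,\zeta_0^N$ i.i.d. $\mu$; for $n\ge1$, conditionally on the past, the $\zeta_n^i$ are i.i.d. with law $\Phi(\eta^N_{n-1})$, where $\eta_n^N:=\frac1N\sum_{i=1}^N\delta_{\zeta_n^i}$. Define $\lambda_n^N:=\eta_n^N(G)$, $Q_n^N(x,dx'):=\frac{dQ(x,\cdot)}{d\Phi(\eta_{n-1}^N)}(x')\,\eta_n^N(dx')$ for $n\ge1$, $Q^N_{n,n}:=Id$, $Q^N_{p,n}:=Q^N_{p+1}\cdots Q^N_n$ for $p<n$, and $h^N_{n,n}:=1$, $h_{p,n}^N(x):=\frac{Q^N_{p,n}(1)(x)}{\eta^N_pQ^N_{p,n}(1)}$ for $0\le p<n$. *)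

From HB Require Import structures.
From mathcomp Require Import all_boot all_order all_algebra.
From mathcomp Require Import all_classical all_reals all_analysis.
Set Implicit Arguments. Unset Strict Implicit. Unset Printing Implicit Defensive.
Import Order.TTheory GRing.Theory Num.Theory.
Local Open Scope classical_set_scope.
Local Open Scope ring_scope.

Definition integ d (T : measurableType d) (R : realType)
  (mu : set T -> \bar R) (f : T -> R) : R :=
  fine (\int[mu]_x (f x)%:E)%E.

Definition supnorm (T : Type) (R : realType) (f : T -> R) : R :=
  sup [set `|f x| | x in setT].

Definition countably_generated d (T : measurableType d) : Prop :=
  exists F : nat -> set T, (@measurable d T) = <<s range F >>.

Section ParticleSystem.
Context d (T : measurableType d) (R : realType).
(* q: density of Q(x,.) = G(x) M(x,.) w.r.t. nu ;  G : potential *)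
Variables (q : T -> T -> R) (G : T -> R).
(* a realization of the N-particle system: zeta n i = zeta_n^i *)
Variables (N : nat) (zeta : nat -> 'I_N -> T).

Definition etaN (n : nat) (f : T -> R) : R :=
  N%:R^-1 * \sum_(i < N) f (zeta n i).

Definition lam (n : nat) : R := etaN n G.

(* density of Phi(eta_n^N) = eta_n^N Q / eta_n^N Q(1) w.r.t. nu, at x'
   (note eta Q(1) = eta(G) since Q(x,1) = G(x)) *)
Definition Phi_dens (n : nat) (x' : T) : R :=
  etaN n (fun z => q z x') / etaN n G.

(* dQ(x,.)/dPhi(eta_{n-1}^N)(x'), the version given by the densities *)
Definition RN (n : nat) (x x' : T) : R := q x x' / Phi_dens n.-1 x'.

Definition QN (n : nat) (f : T -> R) (x : T) : R :=
  etaN n (fun x' => RN n x x' * f x').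

(* Q_{p,n}^N = Q_{p+1}^N ... Q_n^N  (identity if n <= p) *)
Fixpoint QNpn (p n : nat) (f : T -> R) {struct n} : T -> R :=
  match n with
  | 0 => f
  | n'.+1 => if (p <= n')%N then QNpn p n' (QN n'.+1 f) else f
  end.

Definition hN (p n : nat) (x : T) : R :=
  if (p < n)%N then QNpn p n (fun=> 1) x / etaN p (QNpn p n (fun=> 1))
  else 1.

End ParticleSystem.

From HB Require Import structures.
From mathcomp Require Import all_boot all_order all_algebra.
From mathcomp Require Import all_classical all_reals all_analysis.
From mathcomp Require Import ring lra measurable_realfun.
Import Order.TTheory GRing.Theory Num.Theory.
Local Open Scope classical_set_scope.
Local Open Scope ring_scope.

Set Implicit Arguments.
Unset Strict Implicit.
Unset Printing Implicit Defensive.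

(* Each Q^N_k acts as a finite mixture of point masses with densities
   q(x, .) in [em, ep]. Such a kernel contracts the relative deviation of f
   from the ray through a positive h: if |f - c h| <= B h, then
   |Q f - c' Q h| <= (1 - em/ep) B Q h for a suitable c'. Starting from
   |phi - 0 * 1| <= ||phi||, Q_{0,n} phi is within (1 - em/ep)^n ||phi||,
   hence within rho^n ||phi||, of c Q_{0,n} 1. Integrating against eta_0^N,
   for which eta_0^N Q_{0,n} = (prod_p lambda_p) eta_n^N, puts eta_n^N(phi)
   near c; integrating against mu' puts the ratio mu'Q_{0,n}phi / mu'Q_{0,n}1
   near c; and Q_{0,n} 1 (x) <= (ep/em) Q_{0,n} 1 (x') controls the
   normalisations. *)

Section WithinRay.
Variables (T : Type) (R : numDomainType).

Definition within_ray (h f : T -> R) (B : R) : Prop :=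
  exists c, forall x, `|f x - c * h x| <= B * h x.

Lemma within_ray_le (h f : T -> R) B B' : (forall x, 0 <= h x) -> B <= B' ->
  within_ray h f B -> within_ray h f B'.
Proof.
by move=> h_ge0 BB' [c hc]; exists c => x; rewrite (le_trans (hc x)) // ler_wpM2r.
Qed.

End WithinRay.

Lemma normr_le_supnorm (T : Type) (R : realType) (f : T -> R) :
  (exists c, forall x, `|f x| <= c) -> forall x, `|f x| <= supnorm f.
Proof. by move=> [c fc] x; apply: ub_le_sup; [exists c => _ [y _ <-] | exists x]. Qed.

Section BoundedIntegrals.
Context d (T : measurableType d) (R : realType) (P : probability T R).

Definition bounded_measurable (f : T -> R) : Prop :=
  measurable_fun setT f /\ exists K, forall x, `|f x| <= K.

Lemma bounded_measurable_cst c : bounded_measurable (fun=> c).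
Proof. by split => //; exists `|c|. Qed.

Lemma bounded_measurableZ c f :
  bounded_measurable f -> bounded_measurable (fun x => c * f x).
Proof.
move=> [mf [K hK]]; split; first exact: measurable_funM.
by exists (`|c| * K) => x; rewrite normrM ler_wpM2l.
Qed.

Lemma bounded_measurableB f g :
  bounded_measurable f -> bounded_measurable g ->
  bounded_measurable (fun x => f x - g x).
Proof.
move=> [mf [K hK]] [mg [L hL]]; split; first exact: measurable_funB.
by exists (K + L) => x; rewrite (le_trans (ler_normB _ _)) // lerD.
Qed.

Lemma bounded_measurable_norm f :
  bounded_measurable f -> bounded_measurable (fun x => `|f x|).
Proof.
move=> [mf [K hK]]; split; first exact: measurableT_comp.
by exists K => x; rewrite normr_id.
Qed.

Lemma bounded_measurable_integrable f :
  bounded_measurable f -> P.-integrable setT (EFin \o f).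
Proof.
move=> [mf [K hK]]; apply/integrableP; split; first exact/measurable_EFinP.
apply: (@le_lt_trans _ _ ((`|K|)%:E * P setT)%E).
  apply: integral_le_bound => //; first exact/measurable_EFinP.
  by apply: aeW => x _ /=; rewrite lee_fin (le_trans (hK x)) // ler_norm.
by rewrite probability_setT mule1 ltey.
Qed.

Lemma integ_cst c : integ P (fun=> c) = c.
Proof.
by rewrite /integ -/(Rintegral _ _ _) Rintegral_cst //= probability_setT mulr1.
Qed.

Lemma integ_le f g : bounded_measurable f -> bounded_measurable g ->
  (forall x, f x <= g x) -> integ P f <= integ P g.
Proof.
by move=> bf bg fg; apply: le_Rintegral => //; exact: bounded_measurable_integrable.
Qed.

Lemma integ_mulr f c :
  bounded_measurable f -> integ P (fun x => f x * c) = integ P f * c.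
Proof.
by move=> bf; apply: RintegralZr => //; exact: bounded_measurable_integrable.
Qed.

Lemma integ_ray_bound f g c b :
  bounded_measurable f -> bounded_measurable g ->
  (forall x, `|f x - c * g x| <= b * g x) ->
  `|integ P f - c * integ P g| <= b * integ P g.
Proof.
move=> bf bg fcg; have bcg := bounded_measurableZ c bg.
have bfcg := bounded_measurableB bf bcg.
rewrite -!RintegralZl //; try exact: bounded_measurable_integrable.
rewrite -RintegralB //; try exact: bounded_measurable_integrable.
apply: le_trans (le_normr_Rintegral _ _) _ => //.
  exact: bounded_measurable_integrable.
apply: le_Rintegral => //; apply: bounded_measurable_integrable.
  exact: bounded_measurable_norm.
exact: bounded_measurableZ.
Qed.

End BoundedIntegrals.

Section FiniteKernel.
Variables (T : Type) (R : realFieldType) (I : finType) (i0 : I).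
Variables (w : I -> R) (y : I -> T) (q : T -> T -> R) (em ep : R).
Hypothesis w_gt0 : forall i, 0 < w i.
Hypothesis em_gt0 : 0 < em.
Hypothesis q_bnd : forall x x', em <= q x x' <= ep.

Definition fkernel (g : T -> R) (x : T) : R :=
  \sum_i w i * q x (y i) * g (y i).

Let mass (g : T -> R) : R := \sum_i w i * g (y i).

Lemma sumr_gt0 (f : I -> R) : (forall i, 0 < f i) -> 0 < \sum_i f i.
Proof.
move=> f_gt0; rewrite (bigD1 i0) //= ltr_wpDr ?f_gt0 //.
by rewrite sumr_ge0 // => i _; rewrite ltW.
Qed.

Let ep_gt0 : 0 < ep.
Proof.
by case/andP: (q_bnd (y i0) (y i0)) => /(lt_le_trans em_gt0)/lt_le_trans; apply.
Qed.

Let mass_gt0 (h : T -> R) : (forall x, 0 < h x) -> 0 < mass h.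
Proof. by move=> h_gt0; apply: sumr_gt0 => i; rewrite mulr_gt0. Qed.

Let fkernel_mass_bounds (h : T -> R) x : (forall x, 0 <= h x) ->
  em * mass h <= fkernel h x <= ep * mass h.
Proof.
move=> h_ge0; rewrite !mulr_sumr; apply/andP; split; apply: ler_sum => i _;
  have /andP[lb ub] := q_bnd x (y i);
  have wh : 0 <= w i * h (y i) by rewrite mulr_ge0 ?h_ge0 ?ltW.
all: nra.
Qed.

Lemma fkernel_gt0 (h : T -> R) x : (forall x, 0 < h x) -> 0 < fkernel h x.
Proof.
move=> h_gt0; have /andP[+ _] := fkernel_mass_bounds x (fun x => ltW (h_gt0 x)).
by apply: lt_le_trans; rewrite mulr_gt0 ?mass_gt0.
Qed.

Lemma fkernel_ratio (h : T -> R) x x' : (forall x, 0 < h x) ->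
  fkernel h x <= ep / em * fkernel h x'.
Proof.
move=> h_gt0; have h_ge0 x'' := ltW (h_gt0 x'').
have /andP[_ ub] := fkernel_mass_bounds x h_ge0.
have /andP[lb _] := fkernel_mass_bounds x' h_ge0.
have -> : ep / em * fkernel h x' = ep * (em^-1 * fkernel h x') by rewrite mulrA.
rewrite (le_trans ub) //; apply: ler_wpM2l; first exact: ltW.
by rewrite ler_pdivlMl.
Qed.

Lemma fkernelB (f g : T -> R) c x :
  fkernel f x - c * fkernel g x = fkernel (fun x => f x - c * g x) x.
Proof.
rewrite /fkernel mulr_sumr -sumrB; apply: eq_bigr => i _; ring.
Qed.

Let fkernel_sub_mass (g : T -> R) a x :
  fkernel g x - a * mass g = \sum_i w i * g (y i) * (q x (y i) - a).
Proof.
rewrite /fkernel /mass mulr_sumr -sumrB; apply: eq_bigr => i _; ring.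
Qed.

Lemma fkernel_contract (h f : T -> R) B : (forall x, 0 < h x) -> 0 <= B ->
  within_ray h f B -> within_ray (fkernel h) (fkernel f) ((1 - em / ep) * B).
Proof.
move=> h_gt0 B_ge0 [c fch].
set g := fun x => f x - c * h x.
have S_gt0 := mass_gt0 h_gt0.
exists (c + em / ep * mass g / mass h) => x.
set H := fkernel h x; set a := em / ep * H / mass h.
have a_le_em : a <= em.
  rewrite /a ler_pdivrMr // -mulrA; apply: ler_wpM2l; first exact: ltW.
  rewrite ler_pdivrMl //.
  by have /andP[] := fkernel_mass_bounds x (fun x => ltW (h_gt0 x)).
(* Lowering the density by the constant [a <= em] keeps it nonnegative; the
   removed part is proportional to [mass g] and is absorbed into the new [c]. *)
have -> : fkernel f x - (c + em / ep * mass g / mass h) * H =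
    \sum_i w i * g (y i) * (q x (y i) - a).
  rewrite -fkernel_sub_mass -fkernelB -/H /a; ring.
have -> : (1 - em / ep) * B * H = B * \sum_i w i * h (y i) * (q x (y i) - a).
  by rewrite -fkernel_sub_mass -/H /a; field; rewrite !gt_eqF.
rewrite mulr_sumr (le_trans (ler_norm_sum _ _ _)) // ler_sum // => i _.
have qa : 0 <= q x (y i) - a.
  by rewrite subr_ge0; case/andP: (q_bnd x (y i)) => /(le_trans a_le_em).
have wqa := mulr_ge0 (ltW (w_gt0 i)) qa.
rewrite !normrM (gtr0_norm (w_gt0 i)) (ger0_norm qa).
by have := fch (y i); nra.
Qed.

End FiniteKernel.

Lemma normalized_estimates (R : realFieldType) (Pi I1 Ip eta c r e : R) :
  0 < Pi -> 0 < I1 -> 1 <= r -> I1 <= r * Pi ->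
  `|eta - c| <= e -> `|Ip - c * I1| <= e * I1 ->
  `|Pi^-1 * Ip - I1 / Pi * eta| <= 2 * e * r /\ `|Ip / I1 - eta| <= 2 * e * r ^+ 2.
Proof.
move=> Pi_gt0 I1_gt0 r_ge1 I1_le eta_c Ip_c.
have e_ge0 : 0 <= e := le_trans (normr_ge0 _) eta_c.
have dev_le : `|Ip / I1 - eta| <= 2 * e.
  have -> : Ip / I1 - eta = (Ip - c * I1) / I1 - (eta - c) by field; rewrite gt_eqF.
  have I1V_gt0 : 0 < I1^-1 by rewrite invr_gt0.
  rewrite (le_trans (ler_normB _ _)) // normrM (gtr0_norm I1V_gt0).
  have : `|Ip - c * I1| / I1 <= e by rewrite ler_pdivrMr.
  lra.
split.
  have -> : Pi^-1 * Ip - I1 / Pi * eta = I1 / Pi * (Ip / I1 - eta).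
    by field; rewrite !gt_eqF.
  rewrite normrM (gtr0_norm (divr_gt0 I1_gt0 Pi_gt0)) mulrC.
  apply: ler_pM => //; first by rewrite divr_ge0 ?ltW.
  by rewrite ler_pdivrMr.
apply: le_trans dev_le _; rewrite -[leLHS]mulr1 ler_wpM2l ?mulr_ge0 //.
by rewrite expr2 -[1]mulr1 ler_pM.
Qed.

Section Particle.
Context d (T : measurableType d) (R : realType).
Variables (q : T -> T -> R) (G : T -> R) (N : nat) (zeta : nat -> 'I_N -> T).
Variables (em ep : R).
Hypothesis N_gt0 : (0 < N)%N.
Hypothesis em_gt0 : 0 < em.
Hypothesis q_bnd : forall x x', em <= q x x' <= ep.
Hypothesis G_gt0 : forall x, 0 < G x.

Let i0 : 'I_N := Ordinal N_gt0.

Local Notation Q n := (QNpn q G zeta 0 n).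
Local Notation eta := (etaN zeta).

Lemma etaN_gt0 p (f : T -> R) : (forall x, 0 < f x) -> 0 < eta p f.
Proof.
by move=> f_gt0; rewrite mulr_gt0 ?invr_gt0 ?ltr0n // (sumr_gt0 i0).
Qed.

Lemma etaN_cst p (c : R) : eta p (fun=> c) = c.
Proof.
by rewrite /etaN sumr_const card_ord -[c *+ _]mulr_natl mulKf // pnatr_eq0 -lt0n.
Qed.

Lemma etaN_le p (f g : T -> R) : (forall x, f x <= g x) -> eta p f <= eta p g.
Proof. by move=> fg; rewrite ler_wpM2l ?invr_ge0 // ler_sum. Qed.

Lemma etaN_ray_bound p (f g : T -> R) c b :
  (forall x, `|f x - c * g x| <= b * g x) ->
  `|eta p f - c * eta p g| <= b * eta p g.
Proof.
move=> fcg; rewrite /etaN mulrCA -mulrBr mulrCA normrM ger0_norm ?invr_ge0 //.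
rewrite ler_wpM2l ?invr_ge0 // !mulr_sumr -sumrB.
by rewrite (le_trans (ler_norm_sum _ _ _)) // ler_sum.
Qed.

Let q_gt0 x x' : 0 < q x x'.
Proof. by case/andP: (q_bnd x x') => /(lt_le_trans em_gt0). Qed.

Let em_le_ep : em <= ep.
Proof. by case/andP: (q_bnd (zeta 0 i0) (zeta 0 i0)); apply: le_trans. Qed.

Let ep_gt0 : 0 < ep := lt_le_trans em_gt0 em_le_ep.

Let em_div_ep_bounds : 0 < em / ep <= 1.
Proof. by rewrite divr_gt0 //= ler_pdivrMr ?mul1r. Qed.

Lemma Phi_dens_gt0 p x' : 0 < Phi_dens q G zeta p x'.
Proof. by rewrite divr_gt0 ?etaN_gt0 // => x; apply: q_gt0. Qed.

Definition weight k (i : 'I_N) : R := N%:R^-1 / Phi_dens q G zeta k.-1 (zeta k i).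

Lemma weight_gt0 k i : 0 < weight k i.
Proof. by rewrite divr_gt0 ?Phi_dens_gt0 // invr_gt0 ltr0n. Qed.

Lemma QN_fkernel k : QN q G zeta k = fkernel (weight k) (zeta k) q.
Proof.
apply/funext => g; apply/funext => x; rewrite /QN /etaN /RN mulr_sumr.
by apply: eq_bigr => i _; rewrite /weight; ring.
Qed.

Lemma etaNZ p c (f : T -> R) : eta p (fun x => c * f x) = c * eta p f.
Proof. by rewrite /etaN mulrCA -mulr_sumr. Qed.

Lemma etaN_exchange p p' (F : T -> T -> R) :
  eta p (fun x => eta p' (F x)) = eta p' (fun x' => eta p (F^~ x')).
Proof. by rewrite /etaN -!mulr_sumr exchange_big. Qed.

Lemma etaN_QN p (f : T -> R) :
  eta p (QN q G zeta p.+1 f) = lam G zeta p * eta p.+1 f.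
Proof.
rewrite -etaNZ /QN /RN etaN_exchange /=; congr (_ * _); apply: eq_bigr => i _.
set y := zeta p.+1 i; under eq_fun do rewrite mulrC mulrA mulrAC.
rewrite etaNZ /Phi_dens /lam; field.
by rewrite !gt_eqF ?etaN_gt0 // => x; apply: q_gt0.
Qed.

Lemma etaN_QNpn n (f : T -> R) :
  eta 0 (Q n f) = (\prod_(p < n) lam G zeta p) * eta n f.
Proof.
elim: n f => [|n IHn] f; first by rewrite big_ord0 mul1r.
by rewrite [Q n.+1 f]/= IHn etaN_QN big_ord_recr mulrA.
Qed.

Lemma QN_gt0 k (h : T -> R) x : (forall x, 0 < h x) -> 0 < QN q G zeta k h x.
Proof.
by rewrite QN_fkernel; exact: (fkernel_gt0 i0 (zeta k) (@weight_gt0 k) em_gt0 q_bnd).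
Qed.

Lemma QN_ratio k (h : T -> R) x x' : (forall x, 0 < h x) ->
  QN q G zeta k h x <= ep / em * QN q G zeta k h x'.
Proof.
by rewrite QN_fkernel; exact: (fkernel_ratio i0 (zeta k) (@weight_gt0 k) em_gt0 q_bnd).
Qed.

Lemma QN_contract k (h f : T -> R) B : (forall x, 0 < h x) -> 0 <= B ->
  within_ray h f B ->
  within_ray (QN q G zeta k h) (QN q G zeta k f) ((1 - em / ep) * B).
Proof.
by rewrite QN_fkernel; exact: (fkernel_contract i0 (zeta k) (@weight_gt0 k) em_gt0 q_bnd).
Qed.

Lemma QNpn_gt0 n (h : T -> R) x : (forall x, 0 < h x) -> 0 < Q n h x.
Proof.
by elim: n h x => [|n IHn] h x h_gt0 //=; apply: IHn => x'; apply: QN_gt0.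
Qed.

Lemma QNpn_ratio n (h : T -> R) x x' : (0 < n)%N -> (forall x, 0 < h x) ->
  Q n h x <= ep / em * Q n h x'.
Proof.
elim: n h => [|[|n] IHn] h // _ h_gt0; first exact: QN_ratio.
by apply: IHn => // y; apply: QN_gt0.
Qed.

Lemma QNpn_contract n (h f : T -> R) B : (forall x, 0 < h x) -> 0 <= B ->
  within_ray h f B -> within_ray (Q n h) (Q n f) ((1 - em / ep) ^+ n * B).
Proof.
have s_ge0 : 0 <= 1 - em / ep by case/andP: em_div_ep_bounds => _; rewrite subr_ge0.
elim: n h f B => [|n IHn] h f B h_gt0 B_ge0 hfB; first by rewrite expr0 mul1r.
rewrite exprSr -mulrA /=; apply: IHn; rewrite ?mulr_ge0 //.
  by move=> x; apply: QN_gt0.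
exact: QN_contract.
Qed.

Hypothesis mq2 : forall x', measurable_fun setT (q^~ x').

Lemma QN_bounded_measurable k (g : T -> R) :
  bounded_measurable (QN q G zeta k g).
Proof.
rewrite QN_fkernel; split.
  by apply: measurable_sum => i; do 2 apply: measurable_funM => //.
exists (\sum_i weight k i * ep * `|g (zeta k i)|) => x.
rewrite (le_trans (ler_norm_sum _ _ _)) // ler_sum // => i _.
rewrite 2!normrM (gtr0_norm (weight_gt0 k i)) (gtr0_norm (q_gt0 _ _)).
apply: ler_wpM2r => //; apply: ler_wpM2l; first exact/ltW/weight_gt0.
by case/andP: (q_bnd x (zeta k i)).
Qed.

Lemma QNpn_bounded_measurable n (f : T -> R) :
  bounded_measurable f -> bounded_measurable (Q n f).
Proof.
by elim: n f => [|n IHn] f bf //=; apply: IHn; apply: QN_bounded_measurable.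
Qed.

Lemma integ_QNpn1_bounds (mu' : probability T R) n : (0 < n)%N ->
  0 < integ mu' (Q n (fun=> 1)) <= ep / em * \prod_(p < n) lam G zeta p.
Proof.
move=> n_gt0; set Q1 := Q n (fun=> 1).
have Q1_gt0 x : 0 < Q1 x by apply: QNpn_gt0 => _; exact: ltr01.
have bQ1 : bounded_measurable Q1.
  exact/QNpn_bounded_measurable/bounded_measurable_cst.
have r_gt0 : 0 < ep / em by rewrite divr_gt0.
have Q1_ratio x x' : Q1 x <= ep / em * Q1 x'.
  by apply: QNpn_ratio => // _; exact: ltr01.
apply/andP; split.
  apply: (@lt_le_trans _ _ (Q1 (zeta 0 i0) / (ep / em))); first exact: divr_gt0.
  rewrite -[leLHS](integ_cst mu'); apply: integ_le => // [|x].
    exact: bounded_measurable_cst.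
  by rewrite ler_pdivrMr // mulrC.
have <- : eta 0 Q1 = \prod_(p < n) lam G zeta p by rewrite etaN_QNpn etaN_cst mulr1.
rewrite -etaNZ -[leRHS](integ_cst mu'); apply: integ_le => // [|x].
  exact: bounded_measurable_cst.
by rewrite -[leLHS](etaN_cst 0 (Q1 x)); apply: etaN_le.
Qed.

Lemma particle_estimates (mu' : probability T R) n (phi : T -> R) :
  (0 < n)%N -> bounded_measurable phi ->
  let rho := 1 - (em / ep) ^+ 2 in
  `| (\prod_(p < n) lam G zeta p)^-1 * integ mu' (Q n phi)
     - integ mu' (hN q G zeta 0 n) * eta n phi |
    <= 2 * supnorm phi * rho ^+ n * (ep / em)
  /\
  `| integ mu' (Q n phi) / integ mu' (Q n (fun=> 1)) - eta n phi |
    <= 2 * supnorm phi * rho ^+ n * (ep / em) ^+ 2.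
Proof.
move=> n_gt0 bphi rho; set A := supnorm phi; set Q1 := Q n (fun=> 1).
set Pi := \prod_(p < n) lam G zeta p.
have Q1_gt0 x : 0 < Q1 x by apply: QNpn_gt0 => _; exact: ltr01.
have Pi_gt0 : 0 < Pi by apply: prodr_gt0 => p _; exact: etaN_gt0.
have etaQ1 : eta 0 Q1 = Pi by rewrite etaN_QNpn etaN_cst mulr1.
have phi_le x : `|phi x| <= A by apply: normr_le_supnorm; case: bphi.
have A_ge0 : 0 <= A := le_trans (normr_ge0 _) (phi_le (zeta 0 i0)).
have [c Qphi_c] : within_ray Q1 (Q n phi) (A * rho ^+ n).
  apply: (within_ray_le (fun x => ltW (Q1_gt0 x)) _ (QNpn_contract n _ A_ge0 _)).
  - rewrite mulrC; apply: ler_wpM2l => //.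
    have /andP[e_gt0 e_le1] := em_div_ep_bounds.
    by apply: lerXn2r; rewrite ?nnegrE /rho; nra.
  - by move=> _; exact: ltr01.
  - by exists 0 => x; rewrite mul0r subr0 mulr1.
have eta_c : `|eta n phi - c| <= A * rho ^+ n.
  have := etaN_ray_bound 0 Qphi_c; rewrite etaQ1 etaN_QNpn -/Pi.
  by rewrite [c * _]mulrC -mulrBr normrM (gtr0_norm Pi_gt0) mulrC ler_pM2r.
have hN_E : hN q G zeta 0 n = fun x => Q1 x * Pi^-1.
  by apply/funext => x; rewrite /hN n_gt0 etaQ1.
have /andP[I1_gt0 I1_le] := integ_QNpn1_bounds mu' n_gt0.
have bQ1 : bounded_measurable Q1.
  exact/QNpn_bounded_measurable/bounded_measurable_cst.
rewrite hN_E integ_mulr // -(mulrA 2 A).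
apply: (normalized_estimates Pi_gt0 I1_gt0 _ I1_le eta_c).
  by rewrite ler_pdivlMr ?mul1r.
by apply: integ_ray_bound => //; exact: QNpn_bounded_measurable.
Qed.

End Particle.

Theorem theorem2 (d : measure_display) (T : measurableType d) (R : realType)
  (hcg : countably_generated T)
  (G : T -> R) (M : R.-pker T ~> T) (nu : probability T R)
  (q : T -> T -> R) (em ep : R)
  (mG : measurable_fun setT G) (G_pos : forall x, 0 < G x)
  (G_bnd : exists c : R, forall x, G x <= c)
  (hem : 0 < em) (hep : 0 < ep)
  (q_bnd : forall x y, em <= q x y <= ep)
  (mq1 : forall x, measurable_fun setT (q x))
  (mq2 : forall y, measurable_fun setT (fun x => q x y))
  (hQ : forall x (A : set T), measurable A ->
     ((G x)%:E * M x A = \int[nu]_(y in A) (q x y)%:E)%E)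
  (n : nat) (hn : (1 <= n)%N)
  (phi : T -> R) (mphi : measurable_fun setT phi)
  (bphi : exists c : R, forall x, `|phi x| <= c)
  (mu' : probability T R) (N : nat) (N_ge1 : (1 <= N)%N)
  (zeta : nat -> 'I_N -> T) :
  let rho := 1 - (em / ep) ^+ 2 in
  `| (\prod_(p < n) lam G zeta p)^-1 * integ mu' (QNpn q G zeta 0 n phi)
     - integ mu' (hN q G zeta 0 n) * etaN zeta n phi |
    <= 2 * supnorm phi * rho ^+ n * (ep / em)
  /\
  `| integ mu' (QNpn q G zeta 0 n phi) / integ mu' (QNpn q G zeta 0 n (fun=> 1))
     - etaN zeta n phi |
    <= 2 * supnorm phi * rho ^+ n * (ep / em) ^+ 2.
Proof.
exact: (particle_estimates zeta N_ge1 hem q_bnd G_pos mq2 mu' hn (conj mphi bphi)).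
Qed.
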